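(* Fix $s,s'\in S$ and $a\in Act(s)$ with interface function $I_{s,a}$. Let $(\omega_1,\dots,\omega_M)\in\Omega^M$ be $M\in\mathbb{N}$ i.i.d. samples from $\mathbb{P}$, let $F_i=F(\mathcal{T}^{-1}(s),a,\omega_i)$, and define $$\check M=|\{i\in\{1,\dots,M\}: F_i\subseteq\mathcal{T}^{-1}(s')\}|,\qquad \hat M=|\{i\in\{1,\dots,M\}: F_i\cap\mathcal{T}^{-1}(s')\ne\emptyset\}|.$$ For $\beta\in(0,1)$ let $\check P_{lb}=0$ if $\check M=0$, and otherwise let $\check P_{lb}$ be the solution of $\frac{\beta}{2}=\sum_{\ell=\check M}^{M}\binom{M}{\ell}\check P_{lb}^{\ell}(1-\check P_{lb})^{M-\ell}$; let $\hat P_{ub}=1$ if $\hat M=M$, and otherwise let $\hat P_{ub}$ be the solution of $\frac{\beta}{2}=\sum_{\ell=0}^{\hat M}\binom{M}{\ell}\hat P_{ub}^{\ell}(1-\hat P_{ub})^{M-\ell}$. Then $$\mathbb{P}^M\Big\{(\omega_1,\dots,\omega_M)\in\Omega^M:\ \check P_{lb}\le\check p(s,a,s')\ \wedge\ \hat p(s,a,s')\le\hat P_{ub}\Big\}\ge 1-\beta.$$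
   Context: System: $x_{k+1}=f(x_k,u_k,\eta_k)$ with $x_k\in\mathcal{X}\subset\mathbb{R}^n$ compact, $u_k\in\mathcal{U}\subseteq\mathbb{R}^m$, $\eta_k:\Omega\to\mathcal{W}\subseteq\mathbb{R}^p$ i.i.d. on $(\Omega,\mathcal{F},\mathbb{P})$, $f:\mathcal{X}\times\mathcal{U}\times\mathcal{W}\to\mathcal{X}$; $\eta(\omega)$ denotes a noise realisation. $\mathcal{X}$ is partitioned into disjoint convex polytopes $R_1,\dots,R_v$, $R_\star=\mathbb{R}^n\setminus\mathcal{X}$, abstract states $S=\{s_1,\dots,s_v,s_\star\}$, abstraction map $\mathcal{T}:\mathbb{R}^n\to S$ with $\mathcal{T}(x)=s_i\iff x\in R_i$, $\mathcal{T}^{-1}(s)$ the region of $s$. $\bar{\mathbf u}=\{\bar u_1,\dots,\bar u_J\}\subset\mathcal{U}$ is a finite set of representative inputs; $Act$ is a finite action set with enabled actions $Act(s)$, and for $a\in Act(s)$ the interface function is $I_{s,a}:\mathcal{T}^{-1}(s)\to\bar{\mathbf u}$. Forward reachable set: $F(X,a,\omega)=\{f(x,u,\eta(\omega)): x\in X,\ u=I_{\mathcal{T}(x),a}(x)\}$. For compact $X'$: $\psi(x,X',a)=\mathbb{P}\{\omega: f(x,I_{\mathcal{T}(x),a}(x),\eta(\omega))\in X'\}$, and $\check p(s,a,s')=\min_{x\in\mathcal{T}^{-1}(s)}\psi(x,\mathcal{T}^{-1}(s'),a)$, $\hat p(s,a,s')=\max_{x\in\mathcal{T}^{-1}(s)}\psi(x,\mathcal{T}^{-1}(s'),a)$.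 *)

From HB Require Import structures.
From mathcomp Require Import all_boot all_order all_algebra.
From mathcomp Require Import all_classical all_reals.
From mathcomp Require Import ereal topology matrix_topology normedtype sequences measure probability.
Set Implicit Arguments. Unset Strict Implicit. Unset Printing Implicit Defensive.
Import Order.TTheory GRing.Theory Num.Theory.
Local Open Scope classical_set_scope.
Local Open Scope ring_scope.

(* A (possibly not closed) convex polytope in R^n: a bounded set cut out by
   finitely many linear inequalities, each of which may be strict or not. *)
Definition convex_polytope (R : realType) (n : nat) (A : set 'rV[R]_n) : Prop :=
  (exists (k : nat) (a : 'I_k -> 'rV[R]_n) (b : 'I_k -> R) (strict : 'I_k -> bool),
      A = [set x | forall j : 'I_k,
             if strict j then \sum_(l < n) a j 0 l * x 0 l < b j
             else \sum_(l < n) a j 0 l * x 0 l <= b j]) /\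
  (exists r : R, forall x, A x -> forall i j, `|x i j| <= r).

(* Abstract states S = {s_1,...,s_v, s_star}: [Some i] is s_(i+1), [None] is s_star.
   The region T^{-1}(s) of an abstract state. *)
Definition region (R : realType) (n v : nat) (X : set 'rV[R]_n)
    (Rg : 'I_v -> set 'rV[R]_n) (s : option 'I_v) : set 'rV[R]_n :=
  match s with Some i => Rg i | None => ~` X end.

(* Forward reachable set F(T^{-1}(s), a, omega) for the interface function
   Is = I_{s,a} (note T(x) = s for x in T^{-1}(s)). *)
Definition reach_set (R : realType) (n m p : nat) (Omega : Type)
    (f : 'rV[R]_n -> 'rV[R]_m -> 'rV[R]_p -> 'rV[R]_n) (eta : Omega -> 'rV[R]_p)
    (Is : 'rV[R]_n -> 'rV[R]_m) (Xs : set 'rV[R]_n) (w : Omega) : set 'rV[R]_n :=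
  [set f x (Is x) (eta w) | x in Xs].

Definition psi (R : realType) (n m p : nat) (d : measure_display)
    (Omega : measurableType d) (P : probability Omega R)
    (f : 'rV[R]_n -> 'rV[R]_m -> 'rV[R]_p -> 'rV[R]_n) (eta : Omega -> 'rV[R]_p)
    (Is : 'rV[R]_n -> 'rV[R]_m) (X' : set 'rV[R]_n) (x : 'rV[R]_n) : \bar R :=
  P [set w | X' (f x (Is x) (eta w))].

(* check p = min over the region, hat p = max over the region (taken as
   inf / sup, which coincide with min / max whenever these are attained). *)
Definition p_check (R : realType) (n m p : nat) (d : measure_display)
    (Omega : measurableType d) (P : probability Omega R)
    (f : 'rV[R]_n -> 'rV[R]_m -> 'rV[R]_p -> 'rV[R]_n) (eta : Omega -> 'rV[R]_p)
    (Is : 'rV[R]_n -> 'rV[R]_m) (Xs X' : set 'rV[R]_n) : \bar R :=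
  ereal_inf [set psi P f eta Is X' x | x in Xs].

Definition p_hat (R : realType) (n m p : nat) (d : measure_display)
    (Omega : measurableType d) (P : probability Omega R)
    (f : 'rV[R]_n -> 'rV[R]_m -> 'rV[R]_p -> 'rV[R]_n) (eta : Omega -> 'rV[R]_p)
    (Is : 'rV[R]_n -> 'rV[R]_m) (Xs X' : set 'rV[R]_n) : \bar R :=
  ereal_sup [set psi P f eta Is X' x | x in Xs].

(* (omega_1,...,omega_M) are M i.i.d. samples from P, realised as random
   elements om i : Omega' -> Omega on a probability space (Omega', Q):
   their joint law is the product measure P^M (on all measurable rectangles). *)
Definition iid_samples (R : realType) (d d' : measure_display)
    (Omega : measurableType d) (Omega' : measurableType d')
    (P : probability Omega R) (Q : probability Omega' R) (M : nat)
    (om : 'I_M -> Omega' -> Omega) : Prop :=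
  (forall i, measurable_fun setT (om i)) /\
  (forall A : 'I_M -> set Omega, (forall i, measurable (A i)) ->
     Q (\bigcap_(i in [set: 'I_M]) (om i @^-1` A i)) = (\prod_(i < M) P (A i))%E).

(* The Clopper-Pearson-type lower bound: plb k is the check P_lb when the
   count check M equals k (0 if k = 0, otherwise the solution in [0,1] of
   beta/2 = sum_{l=k}^{M} C(M,l) p^l (1-p)^(M-l)). *)
Definition is_lower_bound_fun (R : realType) (M : nat) (beta : R) (plb : nat -> R) : Prop :=
  plb 0%N = 0 /\
  forall k : nat, (0 < k <= M)%N ->
    0 <= plb k <= 1 /\
    beta / 2 = \sum_(k <= l < M.+1) 'C(M, l)%:R * plb k ^+ l * (1 - plb k) ^+ (M - l).

(* pub k is hat P_ub when hat M equals k (1 if k = M, otherwise the solution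
   in [0,1] of beta/2 = sum_{l=0}^{k} C(M,l) p^l (1-p)^(M-l)). *)
Definition is_upper_bound_fun (R : realType) (M : nat) (beta : R) (pub : nat -> R) : Prop :=
  pub M = 1 /\
  forall k : nat, (k < M)%N ->
    0 <= pub k <= 1 /\
    beta / 2 = \sum_(0 <= l < k.+1) 'C(M, l)%:R * pub k ^+ l * (1 - pub k) ^+ (M - l).

(* Let A be the event that the whole reachable set F(T^-1(s), a, w) lies in T^-1(s'),
   and B the event that it meets T^-1(s').  A is contained in each event
   {f(x, I(x), eta) in T^-1(s')} with x in T^-1(s), so P(A) <= p_check, and dually
   p_hat <= P(B).  Under i.i.d. sampling the counts Mcheck and Mhat are binomial with
   parameters P(A) and P(B).  Since binomial tails are monotone in the success
   probability, the Clopper-Pearson bounds fail, plb(Mcheck) > P(A) resp.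
   pub(Mhat) < P(B), with probability at most beta/2 each; a union bound concludes. *)

From HB Require Import structures.
From mathcomp Require Import all_boot all_order all_algebra.
From mathcomp Require Import all_classical all_reals.
From mathcomp Require Import ereal topology matrix_topology normedtype sequences measure probability.
From mathcomp Require Import binomial_distribution ring lra.

Set Implicit Arguments.
Unset Strict Implicit.
Unset Printing Implicit Defensive.

Import Order.TTheory GRing.Theory Num.Theory.
Local Open Scope classical_set_scope.
Local Open Scope ring_scope.

Section binomial_tail.
Context {R : realType}.
Implicit Types (p : R) (M k l : nat).

Definition binomial_tail M k p : R := \sum_(k <= l < M.+1) binomial_pmf M p l.

Definition binomial_cdf M k p : R := \sum_(0 <= l < k.+1) binomial_pmf M p l.

Lemma binomial_pmfE M p l :
  binomial_pmf M p l = 'C(M, l)%:R * p ^+ l * (1 - p) ^+ (M - l).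
Proof. by rewrite /binomial_pmf -mulr_natl mulrA. Qed.

Lemma binomial_tailE M k p :
  binomial_tail M k p = \sum_(k <= l < M.+1) 'C(M, l)%:R * p ^+ l * (1 - p) ^+ (M - l).
Proof. by apply: eq_bigr => l _; rewrite binomial_pmfE. Qed.

Lemma binomial_cdfE M k p :
  binomial_cdf M k p = \sum_(0 <= l < k.+1) 'C(M, l)%:R * p ^+ l * (1 - p) ^+ (M - l).
Proof. by apply: eq_bigr => l _; rewrite binomial_pmfE. Qed.

Lemma binomial_pmf_small M p l : (M < l)%N -> binomial_pmf M p l = 0.
Proof. by move=> Ml; rewrite /binomial_pmf bin_small. Qed.

Lemma binomial_pmfSS M p l :
  binomial_pmf M.+1 p l.+1 = p * binomial_pmf M p l + (1 - p) * binomial_pmf M p l.+1.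
Proof.
rewrite !binomial_pmfE binS natrD subSS exprS.
have [lM|Ml] := ltnP l M; first by rewrite -(subnSK lM) exprS; ring.
have [-> ->] : (M - l = 0 /\ M - l.+1 = 0)%N by split; apply/eqP; rewrite subn_eq0 // leqW.
by rewrite bin_small ?ltnS //; ring.
Qed.

Lemma binomial_tail0 M p : binomial_tail M 0 p = 1.
Proof.
rewrite /binomial_tail big_mkord -(expr1n _ M) -(subrK p 1) exprDn.
by apply: eq_bigr => l _; rewrite binomial_pmfE -mulr_natl; ring.
Qed.

Lemma binomial_tailSS M k p :
  binomial_tail M.+1 k.+1 p = p * binomial_tail M k p + (1 - p) * binomial_tail M k.+1 p.
Proof.
rewrite /binomial_tail big_add1 /=.
under eq_bigr do rewrite binomial_pmfSS.
rewrite big_split /= -!mulr_sumr big_add1 /=; congr (_ + (1 - p) * _).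
have [kM|Mk] := leqP k M; last by rewrite !big_geq // ltnW.
by rewrite big_nat_recr //= binomial_pmf_small // addr0.
Qed.

Lemma binomial_tail_ge0 M k p : 0 <= p <= 1 -> 0 <= binomial_tail M k p.
Proof. by move=> p01; apply: sumr_ge0 => l _; exact: binomial_pmf_ge0. Qed.

Lemma binomial_tailS_le M k p :
  0 <= p <= 1 -> binomial_tail M k.+1 p <= binomial_tail M k p.
Proof.
move=> p01; have [kM|Mk] := leqP k M; last by rewrite /binomial_tail !big_geq // ltnW.
by rewrite [leRHS]/binomial_tail big_ltn ?ltnS // lerDr binomial_pmf_ge0.
Qed.

(* Induction on M through Pascal's rule: p * a + (1 - p) * b with b <= a grows with p. *)
Lemma le_binomial_tail M k p p' :
  0 <= p -> p <= p' -> p' <= 1 -> binomial_tail M k p <= binomial_tail M k p'.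
Proof.
move=> p0 pp' p'1.
have p01 : 0 <= p <= 1 by rewrite p0 (le_trans pp' p'1).
have p'01 : 0 <= p' <= 1 by rewrite p'1 (le_trans p0 pp').
elim: M k => [|M IH] [|k]; rewrite ?binomial_tail0 //.
  by rewrite /binomial_tail !big_geq.
rewrite !binomial_tailSS.
have := IH k; have := IH k.+1; have := binomial_tailS_le M k p01.
have := binomial_tail_ge0 M k p01; have := binomial_tail_ge0 M k.+1 p01.
nra.
Qed.

Lemma binomial_cdf_tail M k p : (k < M)%N -> binomial_cdf M k p = 1 - binomial_tail M k.+1 p.
Proof.
move=> kM; rewrite -(binomial_tail0 M p) /binomial_tail /binomial_cdf.
by rewrite (@big_cat_nat _ _ _ k.+1 0 M.+1) //= ?addrK // ltnS ltnW.
Qed.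

Lemma ge_binomial_cdf M k p p' : (k < M)%N ->
  0 <= p -> p <= p' -> p' <= 1 -> binomial_cdf M k p' <= binomial_cdf M k p.
Proof.
by move=> kM p0 pp' p'1; rewrite !binomial_cdf_tail // lerD2l lerN2 le_binomial_tail.
Qed.

Lemma binomial_sum_le_tail M k p (C : pred nat) : 0 <= p <= 1 ->
  (forall j : 'I_M.+1, C j -> k <= j)%N ->
  \sum_(j < M.+1 | C j) binomial_pmf M p j <= binomial_tail M k p.
Proof.
move=> p01 Ck; rewrite /binomial_tail big_geq_mkord.
rewrite [leRHS]big_mkcond [leLHS]big_mkcond /=; apply: ler_sum => j _.
case: ifP => [Cj|_]; first by rewrite Ck.
by case: ifP => // _; exact: binomial_pmf_ge0.
Qed.

Lemma binomial_sum_le_cdf M k p (C : pred nat) : 0 <= p <= 1 -> (k <= M)%N ->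
  (forall j : 'I_M.+1, C j -> j <= k)%N ->
  \sum_(j < M.+1 | C j) binomial_pmf M p j <= binomial_cdf M k p.
Proof.
move=> p01 kM Ck; rewrite /binomial_cdf (@big_nat_widen _ _ _ 0 k.+1 M.+1) // big_mkord.
rewrite [leRHS]big_mkcond [leLHS]big_mkcond /=; apply: ler_sum => j _.
case: ifP => [Cj|_]; first by rewrite ltnS Ck.
by case: ifP => // _; exact: binomial_pmf_ge0.
Qed.

End binomial_tail.

(* With k the least count such that q < plb k (so k > 0 as plb 0 = 0), all counts j
   with q < plb j satisfy j >= k, and the tail from k at q is at most the tail from
   k at plb k, which is beta / 2.  No monotonicity of plb is needed. *)
Lemma clopper_pearson_lower {R : realType} M (beta : R) plb q :
  is_lower_bound_fun M beta plb -> 0 <= beta -> 0 <= q <= 1 ->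
  \sum_(j < M.+1 | q < plb j) binomial_pmf M q j <= beta / 2.
Proof.
case=> plb0 plbS beta0 q01.
have [ex|none] := pselect (exists k, (k < M.+1)%N && (q < plb k)); last first.
  rewrite big_pred0 ?divr_ge0 // => j; apply/negP => qj.
  by apply: none; exists j; rewrite ltn_ord.
have [k /andP[kM qk] kmin] := ex_minnP ex.
have k_gt0 : (0 < k)%N.
  by case: k qk {kM kmin} => // /[!plb0]; case/andP: q01 => q0 _; rewrite ltNge q0.
have kM' : (0 < k <= M)%N by rewrite k_gt0 -ltnS.
have [/andP[plbk0 plbk1] ->] := plbS k kM'.
rewrite -binomial_tailE.
apply: (@le_trans _ _ (binomial_tail M k q)).
  apply: (@binomial_sum_le_tail _ M k q (fun j => q < plb j)) => // j qj.
  by apply: kmin; rewrite ltn_ord.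
by apply: le_binomial_tail _ (ltW qk) plbk1; case/andP: q01.
Qed.

Lemma clopper_pearson_upper {R : realType} M (beta : R) pub q :
  is_upper_bound_fun M beta pub -> 0 <= beta -> 0 <= q <= 1 ->
  \sum_(j < M.+1 | pub j < q) binomial_pmf M q j <= beta / 2.
Proof.
case=> pubM pubS beta0 q01.
have [ex|none] := pselect (exists k, (k < M.+1)%N && (pub k < q)); last first.
  rewrite big_pred0 ?divr_ge0 // => j; apply/negP => qj.
  by apply: none; exists j; rewrite ltn_ord.
have ub j : (j < M.+1)%N && (pub j < q) -> (j <= M)%N by case/andP.
have [k /andP[kM qk] kmax] := ex_maxnP ex ub.
have k_ltM : (k < M)%N.
  rewrite ltn_neqAle -ltnS kM andbT; apply: contraTneq qk => ->.
  by rewrite pubM -leNgt; case/andP: q01.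
have [/andP[pubk0 pubk1] ->] := pubS k k_ltM.
rewrite -binomial_cdfE.
apply: (@le_trans _ _ (binomial_cdf M k q)).
  apply: (@binomial_sum_le_cdf _ M k q (fun j => pub j < q)) => // j qj.
  by apply: kmax; rewrite ltn_ord.
by apply: ge_binomial_cdf k_ltM pubk0 (ltW qk) _; case/andP: q01.
Qed.

Lemma sum_subsets_by_card {R : nmodType} M (C : pred nat) (F : nat -> R) :
  \sum_(S : {set 'I_M} | C #|S|) F #|S| = \sum_(j < M.+1 | C j) F j *+ 'C(M, j).
Proof.
have card_lt (S : {set 'I_M}) : (#|S| < M.+1)%N.
  by rewrite ltnS -[X in (_ <= X)%N]card_ord max_card.
rewrite (partition_big (fun S : {set 'I_M} => inord #|S| : 'I_M.+1) (fun j => C j)) /=;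
  last by move=> S; rewrite inordK.
apply: eq_bigr => j Cj.
have -> : 'C(M, j) = #|[set S : {set 'I_M} | #|S| == j]%SET| by rewrite card_draws card_ord.
rewrite -sumr_const.
apply: eq_big => [S|S /andP[_ /eqP <-]]; last by rewrite inordK.
rewrite inE -(inj_eq val_inj) /= inordK //.
by case: eqP => [->|_]; rewrite ?Cj ?andbF.
Qed.

Section sample_counts.
Context {R : realType} {d d' : measure_display}.
Context {Omega : measurableType d} {Omega' : measurableType d'}.
Variables (P : probability Omega R) (Q : probability Omega' R).
Variables (M : nat) (om : 'I_M -> Omega' -> Omega).
Hypothesis iid : iid_samples P Q om.
Variable A : set Omega.
Hypothesis mA : measurable A.

Let q := fine (P A).

Let PA : P A = q%:E.
Proof. by rewrite /q fineK // fin_num_measure. Qed.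

Let q01 : 0 <= q <= 1.
Proof. by rewrite -!lee_fin -PA measure_ge0 probability_le1. Qed.

(* The counts in the theorem are cardinals of classical sets; [hits] is the finset
   they coincide with, so that the product rule can be applied pattern by pattern. *)
Let hits (o : Omega') : {set 'I_M} := [set i | `[< A (om i o) >]].

Let card_hits o : #|[set i : 'I_M | `[< A (om i o) >]]%classic| = #|hits o|.
Proof. by apply: eq_card => i; rewrite /hits inE; exact: asboolb. Qed.

Let hits_eqE S : [set o | hits o = S] =
  \bigcap_(i in [set: 'I_M]) om i @^-1` (if i \in S then A else ~` A).
Proof.
apply/seteqP; split => o /=.
  move=> <- i _; rewrite /preimage /= inE.
  by case: (pselect (A (om i o))) => h; [rewrite asboolT | rewrite asboolF].
move=> hS; apply/setP => i; rewrite inE.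
by have := hS i I; rewrite /preimage /=; case: ifP => _ h; [exact/asboolP | exact/asboolPn].
Qed.

Let measurable_hits_eq S : measurable [set o | hits o = S].
Proof.
rewrite hits_eqE; apply: fin_bigcap_measurable; first exact: finite_finset.
move=> i _; rewrite -[_ @^-1` _]setTI; apply: iid.1 => //.
by case: ifP => _ //; exact: measurableC.
Qed.

Let probability_hits_eq S :
  Q [set o | hits o = S] = (q ^+ #|S| * (1 - q) ^+ (M - #|S|))%:E.
Proof.
rewrite hits_eqE iid.2; last by move=> i; case: ifP => _ //; exact: measurableC.
transitivity (\prod_(i < M) (if i \in S then q else 1 - q)%:E)%E.
  by apply: eq_bigr => i _; case: ifP => _; rewrite ?probability_setC // PA.
rewrite prodEFin (bigID (mem S)) /=; congr (_ * _)%:E.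
  by rewrite (eq_bigr (fun=> q)) ?prodr_const // => i ->.
rewrite (eq_bigr (fun=> 1 - q)) ?prodr_const => [|i /negbTE -> //].
have -> : (M - #|S| = #|~: S|)%N by rewrite [RHS]cardsCs finset.setCK card_ord.
by congr (_ ^+ _); apply: eq_card => i; rewrite !inE.
Qed.

Let count_hitsE (C : pred nat) :
  [set o | C #|[set i : 'I_M | `[< A (om i o) >]]%classic|] =
  \bigcup_(S in [set S : {set 'I_M} | C #|S|]) [set o | hits o = S].
Proof.
apply/seteqP; split => [o Co|o [S CS hS]] /=; last by rewrite card_hits hS.
by exists (hits o) => //=; rewrite -card_hits.
Qed.

Lemma measurable_count_hits (C : pred nat) :
  measurable [set o | C #|[set i : 'I_M | `[< A (om i o) >]]%classic|].
Proof.
rewrite count_hitsE; apply: fin_bigcup_measurable; first exact: finite_finset.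
by move=> S _; exact: measurable_hits_eq.
Qed.

Lemma probability_count_hits (C : pred nat) :
  Q [set o | C #|[set i : 'I_M | `[< A (om i o) >]]%classic|] =
  (\sum_(j < M.+1 | C j) binomial_pmf M q j)%:E.
Proof.
rewrite count_hitsE measure_fin_bigcup; first last.
- by move=> S _; exact: measurable_hits_eq.
- by move=> S S' _ _ [o [/= -> ->]].
- exact: finite_finset.
rewrite (eq_fsbigr (fun S : {set 'I_M} => (q ^+ #|S| * (1 - q) ^+ (M - #|S|))%:E));
  last by move=> S _; exact: probability_hits_eq.
rewrite fsumEFin; last exact: finite_finset.
rewrite -(@bigfs _ _ _ _ (index_enum _) (fun S : {set 'I_M} => C #|S|)).
- by rewrite (@sum_subsets_by_card _ M C (fun j => q ^+ j * (1 - q) ^+ (M - j))).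
- exact: index_enum_uniq.
- by move=> S _; rewrite mem_index_enum.
Qed.

Lemma probability_clopper_pearson_lower beta plb :
  is_lower_bound_fun M beta plb -> 0 <= beta ->
  (Q [set o | (q < plb #|[set i : 'I_M | `[< A (om i o) >]]%classic|)%R] <= (beta / 2)%:E)%E.
Proof.
move=> hplb beta0.
by rewrite (probability_count_hits (fun j => q < plb j)) lee_fin clopper_pearson_lower.
Qed.

Lemma probability_clopper_pearson_upper beta pub :
  is_upper_bound_fun M beta pub -> 0 <= beta ->
  (Q [set o | (pub #|[set i : 'I_M | `[< A (om i o) >]]%classic| < q)%R] <= (beta / 2)%:E)%E.
Proof.
move=> hpub beta0.
by rewrite (probability_count_hits (fun j => pub j < q)) lee_fin clopper_pearson_upper.
Qed.

End sample_counts.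

Section reach_bounds.
Context {R : realType} {n m p : nat} {d : measure_display} {Omega : measurableType d}.
Variables (P : probability Omega R) (f : 'rV[R]_n -> 'rV[R]_m -> 'rV[R]_p -> 'rV[R]_n).
Variables (eta : Omega -> 'rV[R]_p) (Is : 'rV[R]_n -> 'rV[R]_m) (Xs X' : set 'rV[R]_n).
Hypothesis mpsi : forall x, Xs x -> measurable [set w | X' (f x (Is x) (eta w))].

Lemma probability_reach_sub_le_p_check :
  measurable [set w | reach_set f eta Is Xs w `<=` X'] ->
  (P [set w | reach_set f eta Is Xs w `<=` X'] <= p_check P f eta Is Xs X')%E.
Proof.
move=> msub; apply: le_ereal_inf_tmp => _ [x Xsx <-].
apply: le_measure; rewrite ?inE //; first exact: mpsi.
by move=> w sub; apply: sub; exists x.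
Qed.

Lemma p_hat_le_probability_reach_meet :
  measurable [set w | reach_set f eta Is Xs w `&` X' !=set0] ->
  (p_hat P f eta Is Xs X' <= P [set w | reach_set f eta Is Xs w `&` X' !=set0])%E.
Proof.
move=> mmeet; apply: ge_ereal_sup => _ [x Xsx <-].
apply: le_measure; rewrite ?inE //; first exact: mpsi.
by move=> w X'fx; exists (f x (Is x) (eta w)); split => //; exists x.
Qed.

End reach_bounds.

Lemma probability_setCI_ge {R : realType} {d : measure_display} {T : measurableType d}
    (Q : probability T R) (A B : set T) : measurable A -> measurable B ->
  (1 - (Q A + Q B) <= Q (~` A `&` ~` B))%E.
Proof.
move=> mA mB; rewrite -setCU probability_setC; last exact: measurableU.
exact: leeB (lexx _) (measureU2 _ mA mB).
Qed.

Theorem theorem2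
  (R : realType) (n m p v : nat)
  (* state space, inputs, noise space, dynamics *)
  (X : set 'rV[R]_n) (U : set 'rV[R]_m) (W : set 'rV[R]_p)
  (f : 'rV[R]_n -> 'rV[R]_m -> 'rV[R]_p -> 'rV[R]_n)
  (hX : @compact 'rV[R^o]_n X)
  (hf : forall x u w, X x -> U u -> W w -> X (f x u w))
  (* partition of X into disjoint convex polytopes R_1,...,R_v *)
  (Rg : 'I_v -> set 'rV[R]_n)
  (hRpoly : forall i, convex_polytope (Rg i))
  (hRne : forall i, Rg i !=set0)
  (hRdisj : forall i j, i != j -> Rg i `&` Rg j = set0)
  (hRcover : \bigcup_(i in [set: 'I_v]) Rg i = X)
  (* representative inputs, actions, interface functions *)
  (ubar : seq 'rV[R]_m) (hubar : forall u, u \in ubar -> U u)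
  (Act : finType) (ActEn : option 'I_v -> {set Act})
  (I : option 'I_v -> Act -> 'rV[R]_n -> 'rV[R]_m)
  (hI : forall s a x, a \in ActEn s -> region X Rg s x -> I s a x \in ubar)
  (* noise *)
  (d : measure_display) (Omega : measurableType d) (P : probability Omega R)
  (eta : Omega -> 'rV[R]_p) (heta : forall w, W (eta w))
  (* fixed s, s', a in Act(s) *)
  (s : 'I_v) (s' : option 'I_v) (a : Act) (ha : a \in ActEn (Some s))
  (* well-posedness: the events used are measurable *)
  (hpsi_meas : forall x, region X Rg (Some s) x ->
     measurable [set w | region X Rg s' (f x (I (Some s) a x) (eta w))])
  (hsub_meas : measurable
     [set w | reach_set f eta (I (Some s) a) (region X Rg (Some s)) w `<=` region X Rg s'])
  (hmeet_meas : measurable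
     [set w | reach_set f eta (I (Some s) a) (region X Rg (Some s)) w `&` region X Rg s' !=set0])
  (* M i.i.d. samples *)
  (M : nat) (d' : measure_display) (Omega' : measurableType d')
  (Q : probability Omega' R) (om : 'I_M -> Omega' -> Omega)
  (hiid : iid_samples P Q om)
  (* confidence level and the bounds *)
  (beta : R) (hbeta : 0 < beta < 1)
  (plb pub : nat -> R)
  (hplb : is_lower_bound_fun M beta plb)
  (hpub : is_upper_bound_fun M beta pub) :
  let F := fun (i : 'I_M) (o : Omega') =>
    reach_set f eta (I (Some s) a) (region X Rg (Some s)) (om i o) in
  let Mcheck := fun o : Omega' =>
    #|[set i : 'I_M | `[< F i o `<=` region X Rg s' >]]| in
  let Mhat := fun o : Omega' =>
    #|[set i : 'I_M | `[< F i o `&` region X Rg s' !=set0 >]]| in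
  ((1 - beta)%:E <=
   Q [set o | ((plb (Mcheck o))%:E <=
                 p_check P f eta (I (Some s) a) (region X Rg (Some s)) (region X Rg s'))%E
            /\ (p_hat P f eta (I (Some s) a) (region X Rg (Some s)) (region X Rg s')
                 <= (pub (Mhat o))%:E)%E])%E.
Proof.
cbv zeta; case/andP: hbeta => beta_gt0 _.
set Xs := region X Rg (Some s); set X' := region X Rg s'; set Is := I (Some s) a.
set A := [set w | reach_set f eta Is Xs w `<=` X'].
set B := [set w | reach_set f eta Is Xs w `&` X' !=set0].
have mEA := measurable_count_hits hiid hsub_meas (fun j => fine (P A) < plb j).
have mEB := measurable_count_hits hiid hmeet_meas (fun j => pub j < fine (P B)).
have -> : (1 - beta)%:E = (1 - ((beta / 2)%:E + (beta / 2)%:E))%E.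
  by rewrite -EFinD -splitr EFinB.
apply: le_trans (leeB (lexx 1%E) (leeD
  (probability_clopper_pearson_lower hiid hsub_meas hplb (ltW beta_gt0))
  (probability_clopper_pearson_upper hiid hmeet_meas hpub (ltW beta_gt0)))) _.
apply: le_trans (probability_setCI_ge Q mEA mEB) _.
apply: le_measure; rewrite ?inE.
- exact: measurableI (measurableC mEA) (measurableC mEB).
- exact: measurableI
    (measurable_count_hits hiid hsub_meas (fun j => (plb j)%:E <= _)%E)
    (measurable_count_hits hiid hmeet_meas (fun j => _ <= (pub j)%:E)%E).
move=> o [/negP hA /negP hB]; split.
  apply: le_trans (probability_reach_sub_le_p_check P hpsi_meas hsub_meas).
  by rewrite -[P A]fineK ?fin_num_measure // lee_fin leNgt.
apply: le_trans (p_hat_le_probability_reach_meet P hpsi_meas hmeet_meas) _.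
by rewrite -[P B]fineK ?fin_num_measure // lee_fin leNgt.
Qed.
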